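(* On $M=(0,\infty)$ with $g_R=dx^2$, let $I_k=[2^{-(k+1)},2^{-k}]$ for $k=0,1,2,\dots$ and let $f:(0,\infty)\to\mathbb R$ be any smooth function with $|f|<1$ everywhere such that $f\equiv 2^{-(4k+1)}-1$ on $I_{4k}$ and $f\equiv 1-2^{-(4k+3)}$ on $I_{4k+2}$ for all $k\ge0$. Then the Randers metric $R$ with Zermelo data $(dx^2,\,f\partial_x)$ is forward and backward geodesically complete, although $g_R$ is incomplete.
   Context: The Randers metric with Zermelo data $(g_R,W)$, $|W|_R<1$, is the Finsler metric $R(v)=\dfrac{|v|_R^2}{g_R(W,v)+\sqrt{(1-|W|_R^2)|v|_R^2+g_R(W,v)^2}}$, whose unit sphere at $p$ is the translate by $W_p$ of the $g_R$-unit sphere. Forward (resp. backward) completeness means every inextendible geodesic is defined on an interval unbounded above (resp. below). *)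

From Stdlib Require Import Reals Lra.
Open Scope R_scope.

Definition smooth_on_pos (f : R -> R) : Prop :=
  exists F : nat -> R -> R,
    F 0%nat = f /\
    forall (k : nat) (x : R), 0 < x -> derivable_pt_lim (F k) x (F (S k) x).

(* Randers metric with Zermelo data (g_R, W) in dimension 1, g_R = dx^2,
   W = w(x) d/dx:  R(v) = |v|^2 / (g(W,v) + sqrt((1-|W|^2)|v|^2 + g(W,v)^2)). *)
Definition randers (w : R -> R) (x v : R) : R :=
  (v * v) / (w x * v + sqrt ((1 - w x * w x) * (v * v) + (w x * v) * (w x * v))).

Definition randersL (w : R -> R) (x v : R) : R := (randers w x v) ^ 2 / 2.

Definition riemL (x v : R) : R := v * v / 2.

Definition open_interval (D : R -> Prop) : Prop :=
  (exists t, D t) /\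
  (forall a b c, D a -> D c -> a <= b <= c -> D b) /\
  (forall t, D t -> exists e, 0 < e /\ forall s, Rabs (s - t) < e -> D s).

(* (Nonconstant) geodesic of the Lagrangian L on the interval D, with values in
   M = (0,+oo): a C^1 regular curve satisfying the Euler-Lagrange equation
   d/dt (dL/dv)(g, g') = (dL/dx)(g, g'). *)
Definition geodesic (L : R -> R -> R) (D : R -> Prop) (g : R -> R) : Prop :=
  open_interval D /\
  (forall t, D t -> 0 < g t) /\
  exists dg p q : R -> R,
    forall t, D t ->
      derivable_pt_lim g t (dg t) /\
      dg t <> 0 /\
      derivable_pt_lim (fun v => L (g t) v) (dg t) (p t) /\
      derivable_pt_lim (fun x => L x (dg t)) (g t) (q t) /\
      derivable_pt_lim p t (q t).

Definition inextendible_geodesic (L : R -> R -> R) (D : R -> Prop) (g : R -> R) : Prop :=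
  geodesic L D g /\
  ~ (exists (D' : R -> Prop) (h : R -> R),
        geodesic L D' h /\
        (forall t, D t -> D' t) /\
        (forall t, D t -> h t = g t) /\
        (exists t, D' t /\ ~ D t)).

Definition forward_complete (L : R -> R -> R) : Prop :=
  forall D g, inextendible_geodesic L D g ->
    forall M, exists t, D t /\ M < t.

Definition backward_complete (L : R -> R -> R) : Prop :=
  forall D g, inextendible_geodesic L D g ->
    forall M, exists t, D t /\ t < M.

From Pilot Require Import Defs.
From Stdlib Require Import Reals Lra Lia Classical ClassicalEpsilon Ranalysis5.
From Coquelicot Require Import Coquelicot.
Open Scope R_scope.

(* In dimension one the Randers speed of a velocity of sign s is v / (f + s), and it is
   conserved, so every geodesic solves g' = c (f(g) + s) with c > 0. If Phi' = 1 / (1 + s f)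
   on (0, +oo), then Phi (g t) = c s t + A. Since 1 + s f < 2, Phi is unbounded above; on each
   dyadic interval where 1 + s f equals the interval's length Phi grows by exactly 1, and for
   either sign there are infinitely many such intervals accumulating at 0, so Phi is
   unbounded below. Hence Phi is a bijection onto R and g extends to the whole line. For the
   Euclidean metric, t |-> t on (0, +oo) cannot be extended past 0. *)

Definition convex_set (D : R -> Prop) : Prop :=
  forall a b c, D a -> D c -> a <= b <= c -> D b.

Definition unbounded_above_on_pos (Phi : R -> R) : Prop :=
  forall M, exists x, 0 < x /\ M < Phi x.

Definition unbounded_below_on_pos (Phi : R -> R) : Prop :=
  forall M, exists x, 0 < x /\ Phi x < M.

(* Stdlib's [Rtopology] also exports an [open_interval]; the one meant here is from [Defs]. *)
Lemma open_interval_full : Defs.open_interval (fun _ => True).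
Proof.
  split; [exists 0; exact I | split; [now intros | intros t _; exists 1; split; [lra | now intros]]].
Qed.

Lemma derivable_pt_lim_continuity_pt u t l :
  derivable_pt_lim u t l -> continuity_pt u t.
Proof. intro H. apply derivable_continuous_pt. exists l. exact H. Qed.

Lemma derive_zero_constant_on_convex (D : R -> Prop) (u : R -> R) :
  convex_set D -> (forall t, D t -> derivable_pt_lim u t 0) ->
  forall a b, D a -> D b -> u a = u b.
Proof.
  intros HD Hu.
  assert (Hle : forall a b, D a -> D b -> a < b -> u a = u b).
  { intros a b Ha Hb Hab.
    destruct (MVT_cor2 u (fun _ => 0) a b Hab) as [z [Hz _]].
    - intros z Hz. apply Hu, (HD a z b); auto.
    - lra. }
  intros a b Ha Hb.
  destruct (Rtotal_order a b) as [Hab | [-> | Hab]]; auto.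
  symmetry. auto.
Qed.

Lemma continuous_nonvanishing_same_sign (D : R -> Prop) (p : R -> R) :
  convex_set D -> (forall t, D t -> continuity_pt p t /\ p t <> 0) ->
  forall a b, D a -> D b -> 0 < p a * p b.
Proof.
  intros HD Hp.
  assert (Hle : forall a b, D a -> D b -> a < b -> 0 < p a * p b).
  { intros a b Ha Hb Hab.
    assert (Hab' : forall z, a <= z <= b -> continuity_pt p z /\ p z <> 0)
      by (intros z Hz; apply Hp, (HD a z b); auto).
    destruct (Rdichotomy _ _ (proj2 (Hab' a ltac:(lra)))) as [Ha0 | Ha0];
    destruct (Rdichotomy _ _ (proj2 (Hab' b ltac:(lra)))) as [Hb0 | Hb0];
      try nra; exfalso.
    - destruct (IVT_interv p a b) as [z [Hz Hpz]]; auto; [apply Hab'|].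
      exact (proj2 (Hab' z Hz) Hpz).
    - destruct (IVT_interv (fun x => - p x) a b) as [z [Hz Hpz]]; try lra.
      + intros z Hz. apply continuity_pt_opp, Hab'; auto.
      + apply (proj2 (Hab' z Hz)). lra. }
  intros a b Ha Hb.
  destruct (Rtotal_order a b) as [Hab | [<- | Hab]]; auto.
  - destruct (Rdichotomy _ _ (proj2 (Hp a Ha))); nra.
  - rewrite Rmult_comm. auto.
Qed.

Section AntiderivativeOnPos.

Variables Phi k : R -> R.
Hypothesis HPhi : forall x, 0 < x -> derivable_pt_lim Phi x (k x).

Lemma MVT_pos a b : 0 < a < b ->
  exists z, a < z < b /\ Phi b - Phi a = k z * (b - a).
Proof.
  intros Hab. destruct (MVT_cor2 Phi k a b) as [z [Hz Hzab]]; try lra.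
  - intros z Hz. apply HPhi. lra.
  - exists z. auto.
Qed.

Lemma increment_of_constant_derive a b K : 0 < a < b ->
  (forall z, a <= z <= b -> k z = K) -> Phi b - Phi a = K * (b - a).
Proof.
  intros Hab HK. destruct (MVT_pos a b Hab) as [z [Hz ->]].
  rewrite HK; lra.
Qed.

Lemma unbounded_above_of_derive_ge e : 0 < e ->
  (forall x, 0 < x -> e <= k x) -> unbounded_above_on_pos Phi.
Proof.
  intros He Hk M. set (x := 1 + (Rabs (M - Phi 1) + 1) / e).
  assert (Hx : 1 < x).
  { unfold x. pose proof (Rabs_pos (M - Phi 1)).
    assert (0 < (Rabs (M - Phi 1) + 1) / e) by (apply Rdiv_lt_0_compat; lra). lra. }
  exists x. split; [lra|].
  destruct (MVT_pos 1 x ltac:(lra)) as [z [Hz Hinc]].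
  assert (Hgain : e * (x - 1) <= Phi x - Phi 1)
    by (rewrite Hinc; apply Rmult_le_compat_r; [lra | apply Hk; lra]).
  replace (e * (x - 1)) with (Rabs (M - Phi 1) + 1) in Hgain
    by (unfold x; field; lra).
  pose proof (Rle_abs (M - Phi 1)). lra.
Qed.

Hypothesis Hk : forall x, 0 < x -> 0 < k x.

Lemma strict_increasing_on_pos a b : 0 < a -> a < b -> Phi a < Phi b.
Proof.
  intros Ha Hab. destruct (MVT_pos a b ltac:(lra)) as [z [Hz Hinc]].
  assert (0 < k z * (b - a)) by (apply Rmult_lt_0_compat; [apply Hk|]; lra).
  lra.
Qed.

Lemma increasing_on_pos a b : 0 < a -> a <= b -> Phi a <= Phi b.
Proof.
  intros Ha [Hab | ->]; [|lra].
  apply Rlt_le, strict_increasing_on_pos; auto.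
Qed.

Lemma injective_on_pos a b : 0 < a -> 0 < b -> Phi a = Phi b -> a = b.
Proof.
  intros Ha Hb E. destruct (Rtotal_order a b) as [h | [h | h]]; auto.
  - pose proof (strict_increasing_on_pos a b Ha h). lra.
  - pose proof (strict_increasing_on_pos b a Hb h). lra.
Qed.

Lemma unbounded_below_of_increments (a b : nat -> R) d : 0 < d ->
  (forall n, 0 < a n < b n) -> (forall n, b (S n) <= a n) ->
  (forall n, d <= Phi (b n) - Phi (a n)) -> unbounded_below_on_pos Phi.
Proof.
  intros Hd Hab Hnext Hinc M.
  assert (Hdrop : forall n, Phi (b n) <= Phi (b O) - INR n * d).
  { induction n as [|n IH]; [simpl; lra|].
    pose proof (increasing_on_pos (b (S n)) (a n)
                  (Rlt_trans _ _ _ (proj1 (Hab (S n))) (proj2 (Hab (S n)))) (Hnext n)).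
    specialize (Hinc n). rewrite S_INR. lra. }
  destruct (INR_archimed d (Phi (b O) - M) ltac:(lra)) as [n Hn].
  exists (b n). split.
  - destruct (Hab n); lra.
  - specialize (Hdrop n). lra.
Qed.

Lemma le_of_increasing_on_pos a b : 0 < a -> 0 < b -> Phi a <= Phi b -> a <= b.
Proof.
  intros Ha Hb E. destruct (Rle_or_lt a b) as [h | h]; auto.
  pose proof (strict_increasing_on_pos b a Hb h). lra.
Qed.

Lemma surjective_on_pos : unbounded_above_on_pos Phi -> unbounded_below_on_pos Phi ->
  forall y, exists x, 0 < x /\ Phi x = y.
Proof.
  intros Hup Hlo y.
  destruct (Hup y) as [b [Hb Hyb]]. destruct (Hlo y) as [a [Ha Hay]].
  assert (Hab : a < b).
  { destruct (Rlt_or_le a b) as [h | h]; auto.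
    pose proof (increasing_on_pos b a Hb h). lra. }
  destruct (IVT_interv (fun x => Phi x - y) a b) as [z [Hz Hz0]]; try lra.
  - intros z Hz. apply continuity_pt_minus; [|apply continuity_pt_const; now intros ? ?].
    apply (derivable_pt_lim_continuity_pt _ _ (k z)), HPhi. lra.
  - exists z. split; lra.
Qed.

Lemma derivable_pt_lim_inverse_on_pos (Psi : R -> R) :
  (forall y, 0 < Psi y /\ Phi (Psi y) = y) ->
  forall y, derivable_pt_lim Psi y (/ k (Psi y)).
Proof.
  intros HPsi y.
  assert (Hmono : forall u v, u <= v -> Psi u <= Psi v).
  { intros u v Huv. destruct (HPsi u), (HPsi v).
    apply le_of_increasing_on_pos; auto; lra. }
  assert (Hlu : Psi (y - 1) < Psi (y + 1)).
  { destruct (Hmono (y - 1) (y + 1) ltac:(lra)) as [h | E]; auto.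
    destruct (HPsi (y - 1)) as [_ E1], (HPsi (y + 1)) as [_ E2].
    rewrite E in E1. lra. }
  assert (Hcont : continuity_pt Psi y).
  { apply (continuity_pt_recip_interv Phi Psi (Psi (y - 1)) (Psi (y + 1)) Hlu).
    - intros a b Ha Hab _. apply strict_increasing_on_pos; auto.
      destruct (HPsi (y - 1)). lra.
    - intros x _ _. apply HPsi.
    - intros x Hx1 Hx2. destruct (HPsi (y - 1)), (HPsi (y + 1)).
      split; apply Hmono; lra.
    - intros a Ha. apply (derivable_pt_lim_continuity_pt _ _ (k a)), HPhi.
      destruct (HPsi (y - 1)). lra.
    - destruct (HPsi (y - 1)), (HPsi (y + 1)). lra. }
  assert (Prf : forall a, Psi (y - 1) <= a <= Psi (y + 1) -> derivable_pt Phi a).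
  { intros a Ha. exists (k a). apply HPhi. destruct (HPsi (y - 1)). lra. }
  assert (Hy : Psi (y - 1) <= Psi y <= Psi (y + 1)) by (split; apply Hmono; lra).
  assert (Hder : derive_pt Phi (Psi y) (Prf (Psi y) Hy) = k (Psi y))
    by (apply derive_pt_eq_0, HPhi, HPsi).
  assert (Hkpos : 0 < k (Psi y)) by apply Hk, HPsi.
  replace (/ k (Psi y)) with (1 / derive_pt Phi (Psi y) (Prf (Psi y) Hy))
    by (rewrite Hder; field; lra).
  apply (derivable_pt_lim_recip_interv Phi Psi (y - 1) (y + 1) y Prf Hcont); try lra.
  intros x _. apply HPsi.
Qed.

Lemma inverse_on_pos : unbounded_above_on_pos Phi -> unbounded_below_on_pos Phi ->
  exists Psi : R -> R, forall y,
    0 < Psi y /\ Phi (Psi y) = y /\ derivable_pt_lim Psi y (/ k (Psi y)).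
Proof.
  intros Hup Hlo.
  destruct (choice _ (surjective_on_pos Hup Hlo)) as [Psi HPsi].
  exists Psi. intro y. pose proof (derivable_pt_lim_inverse_on_pos Psi HPsi y).
  destruct (HPsi y). auto.
Qed.

End AntiderivativeOnPos.

Lemma antiderivative_on_pos (k : R -> R) :
  (forall x, 0 < x -> continuity_pt k x) ->
  exists Phi : R -> R, forall x, 0 < x -> derivable_pt_lim Phi x (k x).
Proof.
  intros Hk. exists (fun x => RInt k 1 x). intros x Hx.
  apply is_derive_Reals, is_derive_RInt with (a := 1).
  - assert (Hx2 : 0 < x / 2) by lra. exists (mkposreal _ Hx2). intros b Hb.
    change (Rabs (b - x) < x / 2) in Hb. apply Rabs_def2 in Hb.
    refine (RInt_correct k 1 b _). apply ex_RInt_continuous. intros z Hz.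
    apply continuity_pt_filterlim, Hk.
    assert (0 < Rmin 1 b) by (apply Rmin_glb_lt; lra). lra.
  - apply continuity_pt_filterlim, Hk, Hx.
Qed.

Lemma half_pow_pos n : 0 < (/2) ^ n.
Proof. apply pow_lt. lra. Qed.

Lemma half_pow_le m n : (m <= n)%nat -> (/2) ^ n <= (/2) ^ m.
Proof.
  induction 1 as [|n _ IH]; [lra|].
  simpl. pose proof (half_pow_pos n). lra.
Qed.

(* On [(1/2)^(m+1), (1/2)^m] the derivative is 2^(m+1), so Phi gains exactly 1 there. *)
Lemma unbounded_below_of_dyadic_plateaus (Phi e : R -> R) (m : nat -> nat) :
  (forall x, 0 < x -> derivable_pt_lim Phi x (/ e x)) ->
  (forall x, 0 < x -> 0 < e x) ->
  (forall n, (m n < m (S n))%nat) ->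
  (forall n y, (/2) ^ S (m n) <= y <= (/2) ^ m n -> e y = (/2) ^ S (m n)) ->
  unbounded_below_on_pos Phi.
Proof.
  intros HPhi He Hm Hplateau.
  assert (Hk : forall x, 0 < x -> 0 < / e x) by (intros; apply Rinv_0_lt_compat, He; auto).
  assert (Hhalf : forall n, (/2) ^ S n = /2 * (/2) ^ n) by reflexivity.
  apply (unbounded_below_of_increments Phi _ HPhi Hk
           (fun n => (/2) ^ S (m n)) (fun n => (/2) ^ m n) 1); try lra.
  - intro n. rewrite Hhalf. pose proof (half_pow_pos (m n)). lra.
  - intro n. apply half_pow_le, Hm.
  - intro n. pose proof (half_pow_pos (m n)).
    rewrite (increment_of_constant_derive Phi _ HPhi _ _ (/ (/2) ^ S (m n))).
    + rewrite Hhalf. right. field. lra.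
    + rewrite Hhalf. lra.
    + intros z Hz. rewrite (Hplateau n z Hz). reflexivity.
Qed.

Definition unit_sign (s : R) : Prop := s = 1 \/ s = -1.

Lemma unit_sign_add_eq s y : unit_sign s -> y + s = s * (1 + s * y).
Proof. intros [-> | ->]; ring. Qed.

Lemma randers_abs w x v : randers w x v = v * v / (w x * v + Rabs v).
Proof.
  unfold randers. do 2 f_equal.
  replace ((1 - w x * w x) * (v * v) + w x * v * (w x * v)) with (Rsqr v)
    by (unfold Rsqr; ring).
  apply sqrt_Rsqr_abs.
Qed.

(* No hypothesis on [w y + s]: if it vanishes, both sides are [0] since [/ 0 = 0]. *)
Lemma randersL_dir w s y v : unit_sign s -> 0 < s * v ->
  randersL w y v = (v / (w y + s)) ^ 2 / 2.
Proof.
  intros Hs Hv.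
  assert (Habs : Rabs v = s * v)
    by (destruct Hs as [-> | ->]; [rewrite Rabs_right | rewrite Rabs_left]; lra).
  assert (Hv0 : v <> 0) by (intro; subst; lra).
  unfold randersL. rewrite randers_abs, Habs. do 2 f_equal.
  replace (w y * v + s * v) with (v * (w y + s)) by ring.
  unfold Rdiv. rewrite Rinv_mult.
  replace (v * v * (/ v * / (w y + s))) with (v * / v * v * / (w y + s)) by ring.
  rewrite Rinv_r; [ring | exact Hv0].
Qed.

Lemma randersL_derive_v w s y v : unit_sign s -> 0 < s * v -> w y + s <> 0 ->
  derivable_pt_lim (fun v => randersL w y v) v (v / (w y + s) ^ 2).
Proof.
  intros Hs Hv He. apply is_derive_Reals.
  apply is_derive_ext_loc with (f := fun v => (v / (w y + s)) ^ 2 / 2).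
  - assert (Hp : 0 < Rabs v) by (apply Rabs_pos_lt; intro; subst; lra).
    exists (mkposreal _ Hp). intros z Hz.
    change (Rabs (z - v) < Rabs v) in Hz.
    symmetry. apply randersL_dir; auto.
    destruct Hs as [-> | ->];
      [rewrite (Rabs_right v) in Hz | rewrite (Rabs_left v) in Hz];
      apply Rabs_def2 in Hz; lra.
  - auto_derive; [auto | field; exact He].
Qed.

Lemma randersL_derive_x (w w' : R -> R) s y v : unit_sign s -> 0 < s * v ->
  w y + s <> 0 -> derivable_pt_lim w y (w' y) ->
  derivable_pt_lim (fun x => randersL w x v) y (- (v * v) * w' y / (w y + s) ^ 3).
Proof.
  intros Hs Hv He Hw.
  assert (Houter : derivable_pt_lim (fun e => (v / e) ^ 2 / 2) (w y + s)
                     (- (v * v) / (w y + s) ^ 3))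
    by (apply is_derive_Reals; auto_derive; [exact He | field; exact He]).
  assert (Hinner : derivable_pt_lim (fun x => w x + s) y (w' y)).
  { rewrite <- (Rplus_0_r (w' y)).
    apply (derivable_pt_lim_plus w (fun _ => s)); [exact Hw | apply derivable_pt_lim_const]. }
  pose proof (derivable_pt_lim_comp _ _ y _ _ Hinner Houter) as Hcomp.
  apply is_derive_Reals. apply is_derive_Reals in Hcomp.
  eapply is_derive_ext; [|replace (- (v * v) * w' y / (w y + s) ^ 3)
     with (- (v * v) / (w y + s) ^ 3 * w' y) by (field; exact He); exact Hcomp].
  intro x. unfold comp. symmetry. apply randersL_dir; auto.
Qed.

Section RandersGeodesics.

Variables f f' : R -> R.
Hypothesis Hf' : forall x, 0 < x -> derivable_pt_lim f x (f' x).
Hypothesis Hf_lt1 : forall x, 0 < x -> Rabs (f x) < 1.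

Lemma wind_factor_bounds x s : 0 < x -> unit_sign s -> 0 < 1 + s * f x < 2.
Proof.
  intros Hx Hs. pose proof (Hf_lt1 x Hx) as Hb. apply Rabs_def2 in Hb.
  destruct Hs as [-> | ->]; lra.
Qed.

Lemma wind_dir_pos x s : 0 < x -> unit_sign s -> 0 < s * (f x + s).
Proof.
  intros Hx Hs.
  replace (s * (f x + s)) with (1 + s * f x) by (destruct Hs as [-> | ->]; ring).
  apply wind_factor_bounds; auto.
Qed.

Lemma wind_dir_neq0 x s : 0 < x -> unit_sign s -> f x + s <> 0.
Proof.
  intros Hx Hs E. pose proof (wind_dir_pos x s Hx Hs). rewrite E in *. lra.
Qed.

Lemma randers_geodesic_of_ode (D : R -> Prop) (h : R -> R) s c :
  Defs.open_interval D -> (forall t, D t -> 0 < h t) -> unit_sign s -> 0 < c ->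
  (forall t, D t -> derivable_pt_lim h t (c * (f (h t) + s))) ->
  geodesic (randersL f) D h.
Proof.
  intros HD Hpos Hs Hc Hode. split; [exact HD | split; [exact Hpos|]].
  exists (fun t => c * (f (h t) + s)), (fun t => c / (f (h t) + s)),
    (fun t => - ((c * (f (h t) + s)) * (c * (f (h t) + s))) * f' (h t) / (f (h t) + s) ^ 3).
  intros t Ht.
  pose proof (wind_dir_pos _ s (Hpos t Ht) Hs) as Hwind.
  pose proof (wind_dir_neq0 _ s (Hpos t Ht) Hs) as He.
  assert (Hvel : 0 < s * (c * (f (h t) + s))) by nra.
  split; [exact (Hode t Ht) | split; [|split; [|split]]].
  - apply Rmult_integral_contrapositive. split; lra.
  - replace (c / (f (h t) + s)) with (c * (f (h t) + s) / (f (h t) + s) ^ 2)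
      by (field; exact He).
    apply randersL_derive_v; auto.
  - apply randersL_derive_x; auto.
  - assert (Hfh : derivable_pt_lim (fun t => f (h t)) t (f' (h t) * (c * (f (h t) + s))))
      by exact (derivable_pt_lim_comp h f t _ _ (Hode t Ht) (Hf' _ (Hpos t Ht))).
    assert (Houter : derivable_pt_lim (fun e => c / (e + s)) (f (h t))
                       (- c / (f (h t) + s) ^ 2))
      by (apply is_derive_Reals; auto_derive; [auto | field; exact He]).
    replace (- ((c * (f (h t) + s)) * (c * (f (h t) + s))) * f' (h t) / (f (h t) + s) ^ 3)
      with (- c / (f (h t) + s) ^ 2 * (f' (h t) * (c * (f (h t) + s))))
      by (field; exact He).
    exact (derivable_pt_lim_comp _ _ t _ _ Hfh Houter).
Qed.

Section GeodesicData.

Variables (D : R -> Prop) (g dg p q : R -> R).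
Hypothesis HD : convex_set D.
Hypothesis Hg_pos : forall t, D t -> 0 < g t.
Hypothesis Hg : forall t, D t ->
  derivable_pt_lim g t (dg t) /\ dg t <> 0 /\
  derivable_pt_lim (fun v => randersL f (g t) v) (dg t) (p t) /\
  derivable_pt_lim (fun x => randersL f x (dg t)) (g t) (q t) /\
  derivable_pt_lim p t (q t).

Lemma direction_of_velocity t : D t -> exists s, unit_sign s /\ 0 < s * dg t.
Proof.
  intros Ht. destruct (Rdichotomy _ _ (proj1 (proj2 (Hg t Ht)))) as [Hneg | Hpos].
  - exists (-1). split; [right | lra]; reflexivity.
  - exists 1. split; [left | lra]; reflexivity.
Qed.

Lemma momentum_eq t s : D t -> unit_sign s -> 0 < s * dg t ->
  p t = dg t / (f (g t) + s) ^ 2.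
Proof.
  intros Ht Hs Hv. apply (uniqueness_limite (fun v => randersL f (g t) v) (dg t)); [apply Hg, Ht|].
  apply randersL_derive_v; auto. apply wind_dir_neq0; auto.
Qed.

Lemma force_eq t s : D t -> unit_sign s -> 0 < s * dg t ->
  q t = - (dg t * dg t) * f' (g t) / (f (g t) + s) ^ 3.
Proof.
  intros Ht Hs Hv. apply (uniqueness_limite (fun x => randersL f x (dg t)) (g t)); [apply Hg, Ht|].
  apply randersL_derive_x; auto. apply wind_dir_neq0; auto.
Qed.

Lemma velocity_same_sign a b : D a -> D b -> 0 < dg a * dg b.
Proof.
  assert (Hpv : forall t, D t -> 0 < p t * dg t).
  { intros t Ht. destruct (direction_of_velocity t Ht) as [s [Hs Hv]].
    rewrite (momentum_eq t s Ht Hs Hv).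
    pose proof (wind_dir_neq0 _ s (Hg_pos t Ht) Hs).
    replace (dg t / (f (g t) + s) ^ 2 * dg t) with (Rsqr (dg t) / Rsqr (f (g t) + s))
      by (unfold Rsqr; field; auto).
    apply Rdiv_lt_0_compat; apply Rsqr_pos_lt; [apply Hg, Ht | auto]. }
  assert (Hpp : forall a b, D a -> D b -> 0 < p a * p b).
  { apply (continuous_nonvanishing_same_sign D p HD). intros t Ht. split.
    - apply (derivable_pt_lim_continuity_pt _ _ (q t)), Hg, Ht.
    - intro E. specialize (Hpv t Ht). rewrite E in Hpv. lra. }
  intros Ha Hb.
  pose proof (Hpv a Ha). pose proof (Hpv b Hb). pose proof (Hpp a b Ha Hb).
  destruct (Rdichotomy _ _ (proj1 (proj2 (Hg a Ha))));
    destruct (Rdichotomy _ _ (proj1 (proj2 (Hg b Hb)))); nra.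
Qed.

(* dg / (f + s) is the Randers speed, conserved since L is autonomous; in the form
   p (f + s) its derivative vanishes by the Euler-Lagrange equation. *)
Lemma velocity_over_wind_constant s : unit_sign s ->
  (forall t, D t -> 0 < s * dg t) ->
  forall a b, D a -> D b -> dg a / (f (g a) + s) = dg b / (f (g b) + s).
Proof.
  intros Hs Hdir a b Ha Hb.
  assert (Hp : forall t, D t -> dg t / (f (g t) + s) = p t * (f (g t) + s)).
  { intros t Ht. rewrite (momentum_eq t s Ht Hs (Hdir t Ht)).
    field. apply wind_dir_neq0; auto. }
  rewrite (Hp a Ha), (Hp b Hb).
  apply (derive_zero_constant_on_convex D (fun t => p t * (f (g t) + s)) HD); auto.
  intros t Ht. destruct (Hg t Ht) as [Hgd [_ [_ [_ Hpq]]]].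
  assert (Hwind : derivable_pt_lim (fun t => f (g t) + s) t (f' (g t) * dg t)).
  { rewrite <- (Rplus_0_r (f' (g t) * dg t)).
    apply (derivable_pt_lim_plus (fun t => f (g t)) (fun _ => s));
      [exact (derivable_pt_lim_comp g f t _ _ Hgd (Hf' _ (Hg_pos t Ht)))
      | apply derivable_pt_lim_const]. }
  replace 0 with (q t * (f (g t) + s) + p t * (f' (g t) * dg t)).
  - exact (derivable_pt_lim_mult _ _ t _ _ Hpq Hwind).
  - rewrite (force_eq t s Ht Hs (Hdir t Ht)), (momentum_eq t s Ht Hs (Hdir t Ht)).
    field. apply wind_dir_neq0; auto.
Qed.

End GeodesicData.

Lemma randers_geodesic_ode (D : R -> Prop) (g : R -> R) :
  geodesic (randersL f) D g ->
  exists s c, unit_sign s /\ 0 < c /\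
    forall t, D t -> derivable_pt_lim g t (c * (f (g t) + s)).
Proof.
  intros [[[t0 Ht0] [HD _]] [Hpos [dg [p [q Hg]]]]].
  destruct (direction_of_velocity D g dg p q Hg t0 Ht0) as [s [Hs Hv0]].
  assert (Hdir : forall t, D t -> 0 < s * dg t).
  { intros t Ht. pose proof (velocity_same_sign D g dg p q HD Hpos Hg t t0 Ht Ht0). nra. }
  set (c := dg t0 / (f (g t0) + s)).
  exists s, c. split; [exact Hs | split].
  - pose proof (wind_dir_pos _ s (Hpos t0 Ht0) Hs).
    replace c with ((s * dg t0) / (s * (f (g t0) + s))).
    + apply Rdiv_lt_0_compat; auto.
    + unfold c. destruct Hs as [-> | ->]; field; apply wind_dir_neq0; auto;
        [left | right]; reflexivity.
  - intros t Ht. destruct (Hg t Ht) as [Hgd _].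
    replace (c * (f (g t) + s)) with (dg t); [exact Hgd|].
    unfold c. rewrite <- (velocity_over_wind_constant D g dg p q HD Hpos Hg s Hs Hdir t t0 Ht Ht0).
    field. apply wind_dir_neq0; auto.
Qed.

Lemma randers_time_function s : unit_sign s ->
  (forall Phi, (forall x, 0 < x -> derivable_pt_lim Phi x (/ (1 + s * f x))) ->
     unbounded_below_on_pos Phi) ->
  exists Phi Psi : R -> R,
    (forall x, 0 < x -> derivable_pt_lim Phi x (/ (1 + s * f x))) /\
    (forall a b, 0 < a -> 0 < b -> Phi a = Phi b -> a = b) /\
    forall y, 0 < Psi y /\ Phi (Psi y) = y /\ derivable_pt_lim Psi y (1 + s * f (Psi y)).
Proof.
  intros Hs Hlo.
  assert (Hk : forall x, 0 < x -> 0 < / (1 + s * f x))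
    by (intros x Hx; apply Rinv_0_lt_compat, (wind_factor_bounds x s Hx Hs)).
  destruct (antiderivative_on_pos (fun x => / (1 + s * f x))) as [Phi HPhi].
  { intros x Hx. pose proof (wind_factor_bounds x s Hx Hs).
    change (continuity_pt (comp (fun y => / (1 + s * y)) f) x).
    apply continuity_pt_comp.
    - apply (derivable_pt_lim_continuity_pt _ _ (f' x)), Hf', Hx.
    - apply (derivable_pt_lim_continuity_pt _ _ (- s / (1 + s * f x) ^ 2)).
      apply is_derive_Reals. auto_derive; [lra | field; lra]. }
  destruct (inverse_on_pos Phi _ HPhi Hk) as [Psi HPsi].
  { apply (unbounded_above_of_derive_ge Phi _ HPhi (/2)); [lra|].
    intros x Hx. apply Rinv_le_contravar; pose proof (wind_factor_bounds x s Hx Hs); lra. }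
  { exact (Hlo Phi HPhi). }
  exists Phi, Psi. split; [exact HPhi | split; [exact (injective_on_pos Phi _ HPhi Hk)|]].
  intro y. destruct (HPsi y) as [Hy [HPhiPsi HPsi']]. rewrite Rinv_inv in HPsi'. auto.
Qed.

Lemma randers_inextendible_geodesic_total :
  (forall s, unit_sign s -> forall Phi,
     (forall x, 0 < x -> derivable_pt_lim Phi x (/ (1 + s * f x))) ->
     unbounded_below_on_pos Phi) ->
  forall D g, inextendible_geodesic (randersL f) D g -> forall t, D t.
Proof.
  intros Hlo D g [Hgeo Hmax] t. apply NNPP. intro Ht.
  destruct (randers_geodesic_ode D g Hgeo) as [s [c [Hs [Hc Hode]]]].
  destruct Hgeo as [[[t0 Ht0] [HD _]] [Hpos _]].
  destruct (randers_time_function s Hs (Hlo s Hs)) as [Phi [Psi [HPhi [Hinj HPsi]]]].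
  set (A := Phi (g t0) - c * s * t0).
  assert (Hline : forall tau, D tau -> Phi (g tau) = c * s * tau + A).
  { intros tau Htau.
    enough (Phi (g tau) - c * s * tau = Phi (g t0) - c * s * t0) by (unfold A; lra).
    apply (derive_zero_constant_on_convex D (fun t => Phi (g t) - c * s * t) HD); auto.
    intros t1 Ht1.
    replace 0 with (/ (1 + s * f (g t1)) * (c * (f (g t1) + s)) - c * s).
    - apply (derivable_pt_lim_minus (fun t => Phi (g t)) (fun t => c * s * t)).
      + exact (derivable_pt_lim_comp _ _ _ _ _ (Hode t1 Ht1) (HPhi _ (Hpos t1 Ht1))).
      + apply is_derive_Reals. auto_derive; auto. ring.
    - rewrite (unit_sign_add_eq s (f (g t1)) Hs).
      pose proof (wind_factor_bounds _ s (Hpos t1 Ht1) Hs). field. lra. }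
  set (h := fun tau => Psi (c * s * tau + A)).
  apply Hmax. exists (fun _ => True), h. split; [|split; [|split]].
  - apply (randers_geodesic_of_ode _ h s c open_interval_full); auto.
    + intros tau _. apply HPsi.
    + intros tau _. destruct (HPsi (c * s * tau + A)) as [_ [_ HPsi']].
      replace (c * (f (h tau) + s)) with ((1 + s * f (h tau)) * (c * s))
        by (rewrite (unit_sign_add_eq s (f (h tau)) Hs); ring).
      apply (derivable_pt_lim_comp (fun tau => c * s * tau + A) Psi); [|exact HPsi'].
      apply is_derive_Reals. auto_derive; auto. ring.
  - auto.
  - intros tau Htau. unfold h. destruct (HPsi (c * s * tau + A)) as [Hh [HPhiPsi _]].
    apply Hinj; auto. rewrite HPhiPsi, Hline; auto.
  - exists t. auto.
Qed.

End RandersGeodesics.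

Lemma time_function_unbounded_below (f : R -> R)
  (Hbound : forall x, 0 < x -> Rabs (f x) < 1)
  (H4k : forall (k : nat) (x : R),
      (/2) ^ (4 * k + 1) <= x <= (/2) ^ (4 * k) ->
      f x = (/2) ^ (4 * k + 1) - 1)
  (H4k2 : forall (k : nat) (x : R),
      (/2) ^ (4 * k + 3) <= x <= (/2) ^ (4 * k + 2) ->
      f x = 1 - (/2) ^ (4 * k + 3)) :
  forall s, unit_sign s -> forall Phi,
    (forall x, 0 < x -> derivable_pt_lim Phi x (/ (1 + s * f x))) ->
    unbounded_below_on_pos Phi.
Proof.
  intros s Hs Phi HPhi.
  assert (He : forall x, 0 < x -> 0 < 1 + s * f x)
    by (intros x Hx; exact (proj1 (wind_factor_bounds f Hbound x s Hx Hs))).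
  destruct Hs as [-> | ->].
  - apply (unbounded_below_of_dyadic_plateaus Phi _ (fun n => 4 * n)%nat HPhi He);
      [intros; lia|].
    intros n y Hy. replace (S (4 * n)) with (4 * n + 1)%nat in * by lia.
    rewrite (H4k n y Hy). ring.
  - apply (unbounded_below_of_dyadic_plateaus Phi _ (fun n => 4 * n + 2)%nat HPhi He);
      [intros; lia|].
    intros n y Hy. replace (S (4 * n + 2)) with (4 * n + 3)%nat in * by lia.
    rewrite (H4k2 n y Hy). ring.
Qed.

Lemma continuous_extension_of_identity_at_0 (h : R -> R) :
  continuity_pt h 0 -> (forall t, 0 < t -> h t = t) -> h 0 = 0.
Proof.
  intros Hc Hid. apply continuity_pt_filterlim in Hc.
  apply (filterlim_locally_unique (F := at_right 0) h).
  - apply (filterlim_filter_le_1 (F := locally 0)); [apply filter_le_within | exact Hc].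
  - apply (filterlim_ext_loc (fun t => t)).
    + exists (mkposreal 1 Rlt_0_1). intros t _ Ht. symmetry. apply Hid, Ht.
    + apply (filterlim_filter_le_1 (F := locally 0)); [apply filter_le_within | apply filterlim_id].
Qed.

Lemma riemL_identity_inextendible :
  inextendible_geodesic riemL (fun t => 0 < t) (fun t => t).
Proof.
  split.
  - split; [|split; [now intros|]].
    + split; [exists 1; lra | split; [intros; lra|]].
      intros t Ht. exists t. split; [exact Ht|]. intros u Hu. apply Rabs_def2 in Hu. lra.
    + exists (fun _ => 1), (fun _ => 1), (fun _ => 0). intros t Ht.
      split; [apply derivable_pt_lim_id | split; [lra | split; [|split]]];
        [| | apply derivable_pt_lim_const];
        unfold riemL; apply is_derive_Reals; auto_derive; auto; field.
  - intros [D' [h [[[_ [HD' _]] [Hpos [dh [p [q Hh]]]]] [Hsub [Heq [t1 [Ht1 Hout]]]]]]].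
    assert (H0 : D' 0) by (apply (HD' t1 0 1); auto; [apply Hsub | split]; lra).
    assert (Hh0 : h 0 = 0).
    { apply continuous_extension_of_identity_at_0; [|exact Heq].
      apply (derivable_pt_lim_continuity_pt _ _ (dh 0)), Hh, H0. }
    specialize (Hpos 0 H0). lra.
Qed.

Theorem mainTheorem5 (f : R -> R)
  (Hsmooth : smooth_on_pos f)
  (Hbound : forall x, 0 < x -> Rabs (f x) < 1)
  (H4k : forall (k : nat) (x : R),
      (/2) ^ (4 * k + 1) <= x <= (/2) ^ (4 * k) ->
      f x = (/2) ^ (4 * k + 1) - 1)
  (H4k2 : forall (k : nat) (x : R),
      (/2) ^ (4 * k + 3) <= x <= (/2) ^ (4 * k + 2) ->
      f x = 1 - (/2) ^ (4 * k + 3)) :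
  forward_complete (randersL f) /\ backward_complete (randersL f) /\
  ~ (forward_complete riemL /\ backward_complete riemL).
Proof.
  destruct Hsmooth as [F [HF0 HF]].
  assert (Hf' : forall x, 0 < x -> derivable_pt_lim f x (F 1%nat x))
    by (intros x Hx; rewrite <- HF0; apply HF, Hx).
  pose proof (randers_inextendible_geodesic_total f _ Hf' Hbound
                (time_function_unbounded_below f Hbound H4k H4k2)) as Htotal.
  split; [|split].
  - intros D g Hg M. exists (M + 1). split; [apply (Htotal D g Hg) | lra].
  - intros D g Hg M. exists (M - 1). split; [apply (Htotal D g Hg) | lra].
  - intros [_ Hbw].
    destruct (Hbw _ _ riemL_identity_inextendible 0) as [t [Ht Ht0]]. lra.
Qed.
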